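(* Consider the setting in the context and let the sequences be generated by the adaptive-quantization algorithm with positive nonincreasing step sizes $\alpha(k)$. For each $i$ and $k$ let $$\mathbf{v}_i(k)=\mathbf{x}_i(k)-\mathbf{q}_i(k)+\sum_{j=1}^n a_{ij}\mathbf{q}_j(k)-\alpha(k)\mathbf{g}_i(\mathbf{x}_i(k)),\qquad \boldsymbol{\xi}_i(\mathbf{v}_i(k))=\mathbf{v}_i(k)-[\mathbf{v}_i(k)]_{\mathcal{X}},$$ so that $\mathbf{x}_i(k+1)=[\mathbf{v}_i(k)]_{\mathcal{X}}$, and let $\Delta_i(k)=\mathbf{x}_i(k)-\mathbf{q}_i(k)$. Then for all $i\in\mathcal{V}$, $$\|\boldsymbol{\xi}_i(\mathbf{v}_i(k))\|\le\sum_{j\in\mathcal{N}_i}a_{ij}\|\Delta_i(k)-\Delta_j(k)\|+L_i\alpha(k),$$ and, with $L=\sum_{i}L_i$, $$\sum_{i=1}^n\|\boldsymbol{\xi}_i(\mathbf{v}_i(k))\|^2\le 8\sum_{i=1}^n\|\Delta_i(k)\|^2+2L^2\alpha^2(k).$$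
   Context: $\mathcal{X}\subset\mathbb{R}^d$ is a nonempty compact convex set contained in a box $[\boldsymbol{\ell},\mathbf{u}]$; $[\cdot]_{\mathcal{X}}$ is Euclidean projection. For $i\in\mathcal{V}=\{1,\dots,n\}$, $f_i:\mathbb{R}^d\to\mathbb{R}$ is convex with chosen subgradients $\mathbf{g}_i(\mathbf{x})\in\partial f_i(\mathbf{x})$ satisfying $\|\mathbf{g}_i(\mathbf{x})\|\le L_i$ on $\mathcal{X}$. $\mathcal{G}=(\mathcal{V},\mathcal{E})$ is a connected undirected graph, $\mathcal{N}_i$ the neighbors of $i$; $\mathbf{A}=(a_{ij})$ is doubly stochastic, irreducible, aperiodic, with $a_{ij}>0$ iff $(i,j)\in\mathcal{E}$ and $a_{ij}=0$ otherwise (diagonal entries are self-weights); $\sigma_2\in(0,1)$ is its second largest singular value; $L=\sum_i L_i$, $\gamma=48(2+L)/(1-\sigma_2)$; $b$ is the number of bits. Quantizer: for a box in $\mathbb{R}^d$, each coordinate interval is split by $2^b$ equally spaced points (endpoints included); a value is mapped coordinatewise to the nearest grid point (ties toward the smaller); $\mathcal{Q}_k$ is this map over the box used at time $k$. Algorithm: all nodes initialize $\mathbf{x}_i(0)=\mathbf{q}_i(0)$ at one common grid point of the grid of $[\boldsymbol{\ell},\mathbf{u}]$. At each $k\ge0$: $\mathbf{x}_i(k+1)=[\mathbf{x}_i(k)-\mathbf{q}_i(k)+\sum_j a_{ij}\mathbf{q}_j(k)-\alpha(k)\mathbf{g}_i(\mathbf{x}_i(k))]_{\mathcal{X}}$,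 and $\mathbf{q}_i(k+1)=\mathcal{Q}_{k+1}(\mathbf{x}_i(k+1))$ over the box $[\mathbf{q}_i(k)-\tfrac{\gamma}{2}\alpha(k)\mathbf{1},\mathbf{q}_i(k)+\tfrac{\gamma}{2}\alpha(k)\mathbf{1}]$ ($\mathbf{1}$ the all-ones vector). The values $\mathbf{q}_j(k)$ are communicated to neighbors exactly via their bit indices. *)

From HB Require Import structures.
From mathcomp Require Import all_boot all_order all_algebra.
From mathcomp Require Import all_classical all_reals all_analysis.
Set Implicit Arguments. Unset Strict Implicit. Unset Printing Implicit Defensive.
Import Order.TTheory GRing.Theory Num.Theory.
Import numFieldTopology.Exports numFieldNormedType.Exports.
Local Open Scope ring_scope.
Local Open Scope classical_set_scope.

Section Defs.
Variable R : realType.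

Definition edot d (u v : 'rV[R]_d) : R := \sum_(c < d) u 0 c * v 0 c.
Definition enorm d (u : 'rV[R]_d) : R := Num.sqrt (edot u u).

Definition is_euclid_proj d (X : set 'rV[R]_d) (P : 'rV[R]_d -> 'rV[R]_d) : Prop :=
  forall v, X (P v) /\ forall y, X y -> enorm (v - P v) <= enorm (v - y).

Definition convex_fun d (f : 'rV[R]_d -> R) : Prop :=
  forall x y t, 0 <= t -> t <= 1 -> f (t *: x + (1 - t) *: y) <= t * f x + (1 - t) * f y.
Definition is_subgrad d (f : 'rV[R]_d -> R) (x g : 'rV[R]_d) : Prop :=
  forall y, f x + edot g (y - x) <= f y.

Definition doubly_stochastic n (A : 'M[R]_n) : Prop :=
  (forall i j, 0 <= A i j) /\ (forall i, \sum_j A i j = 1) /\ (forall j, \sum_i A i j = 1).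

Definition irreducible_mx n (A : 'M[R]_n) : Prop :=
  forall i j, exists m, 0 < (A ^+ m) i j.

Definition aperiodic_mx n (A : 'M[R]_n) : Prop :=
  forall i, exists M, forall m, (M <= m)%N -> 0 < (A ^+ m) i i.

Definition cnorm n (v : 'cV[R]_n) : R := Num.sqrt (\sum_i v i 0 ^+ 2).

(* s is the second largest singular value of a doubly stochastic A:
   the operator norm of A on the orthogonal complement of the all-ones vector
   (the top singular value 1 being attained on the all-ones vector) *)
Definition second_sv n (A : 'M[R]_n) (s : R) : Prop :=
  (exists v : 'cV[R]_n, \sum_i v i 0 = 0 /\ cnorm v = 1 /\ cnorm (A *m v) = s) /\
  (forall v : 'cV[R]_n, \sum_i v i 0 = 0 -> cnorm (A *m v) <= s * cnorm v).

Definition grid_pt (lo hi : R) (b : nat) (t : nat) : R :=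
  lo + t%:R * (hi - lo) / (2 ^ b - 1)%:R.

(* z is the nearest grid point to y, ties broken toward the smaller point *)
Definition quant1 (lo hi : R) (b : nat) (y z : R) : Prop :=
  exists t : 'I_(2 ^ b),
    z = grid_pt lo hi b t /\
    (forall s : 'I_(2 ^ b), `|y - grid_pt lo hi b t| <= `|y - grid_pt lo hi b s|) /\
    (forall s : 'I_(2 ^ b), (s < t)%N -> `|y - grid_pt lo hi b t| < `|y - grid_pt lo hi b s|).

Definition quant d (lo hi : 'rV[R]_d) (b : nat) (y z : 'rV[R]_d) : Prop :=
  forall c, quant1 (lo 0 c) (hi 0 c) b (y 0 c) (z 0 c).

Definition grid_point d (lo hi : 'rV[R]_d) (b : nat) (z : 'rV[R]_d) : Prop :=
  forall c, exists t : 'I_(2 ^ b), z 0 c = grid_pt (lo 0 c) (hi 0 c) b t.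

Definition const_rv d (a : R) : 'rV[R]_d := \row_(c < d) a.

Definition vv n d (A : 'M[R]_n) (alpha : nat -> R) (g : 'I_n -> 'rV[R]_d -> 'rV[R]_d)
  (x q : nat -> 'I_n -> 'rV[R]_d) (i : 'I_n) (k : nat) : 'rV[R]_d :=
  x k i - q k i + \sum_j A i j *: q k j - alpha k *: g i (x k i).

End Defs.

From HB Require Import structures.
From mathcomp Require Import all_boot all_order all_algebra.
From mathcomp Require Import all_classical all_reals all_analysis.
From mathcomp Require Import ring lra.
Import Order.TTheory GRing.Theory Num.Theory.
Import numFieldTopology.Exports numFieldNormedType.Exports.
Local Open Scope ring_scope.
Local Open Scope classical_set_scope.
Set Implicit Arguments. Unset Strict Implicit. Unset Printing Implicit Defensive.

(* Every x_j(k) lies in X (it is a projection, or the initial point when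
   k = 0), so by convexity so does the average y_i = sum_j a_ij x_j(k).  The
   projection being the nearest point of X, |xi_i| <= |v_i - y_i|, and since
   the rows of A sum to one, v_i - y_i = sum_j a_ij (Delta_i - Delta_j)
   - alpha g_i(x_i): this is the first bound.  Bounding |Delta_i - Delta_j| by
   N_i + N_j with N_i = |Delta_i| gives |xi_i| <= N_i + (A N)_i + L_i alpha,
   hence |xi_i|^2 <= 4 N_i^2 + 4 (A N)_i^2 + 2 L_i^2 alpha^2.  Summing over i,
   Jensen's inequality and the unit column sums of A give
   sum_i (A N)_i^2 <= sum_i N_i^2, and sum_i L_i^2 <= L^2. *)

Section WeightedSums.
Variable R : realDomainType.

Lemma weighted_cauchy_schwarz (I : finType) (w a b : I -> R) :
  (forall i, 0 <= w i) ->
  (\sum_i w i * a i * b i) ^+ 2 <= (\sum_i w i * a i ^+ 2) * (\sum_i w i * b i ^+ 2).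
Proof.
move=> w_ge0.
have lagrange : \sum_i \sum_j w i * w j * (a i * b j - a j * b i) ^+ 2 =
    2 * ((\sum_i w i * a i ^+ 2) * (\sum_i w i * b i ^+ 2)
         - (\sum_i w i * a i * b i) ^+ 2).
  transitivity (\sum_i \sum_j ((w i * a i ^+ 2) * (w j * b j ^+ 2)
      + (w i * b i ^+ 2) * (w j * a j ^+ 2)
      - (2 * (w i * a i * b i)) * (w j * a j * b j))).
    by apply: eq_bigr => i _; apply: eq_bigr => j _; ring.
  under eq_bigr do rewrite sumrB big_split /=.
  rewrite sumrB big_split /= -!big_distrlr /= -mulr_sumr.
  ring.
have : 0 <= \sum_i \sum_j w i * w j * (a i * b j - a j * b i) ^+ 2.
  apply: sumr_ge0 => i _; apply: sumr_ge0 => j _.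
  by rewrite mulr_ge0 ?sqr_ge0 ?mulr_ge0.
rewrite lagrange; lra.
Qed.

Lemma sqr_convex_comb_le (I : finType) (w a : I -> R) :
  (forall i, 0 <= w i) -> \sum_i w i = 1 ->
  (\sum_i w i * a i) ^+ 2 <= \sum_i w i * a i ^+ 2.
Proof.
move=> w_ge0 w_sum1.
have := weighted_cauchy_schwarz a (fun=> 1) w_ge0.
under eq_bigr do rewrite mulr1.
under [X in _ <= _ * X]eq_bigr do rewrite expr1n mulr1.
by rewrite w_sum1 mulr1.
Qed.

Lemma sum_sqr_le_sqr_sum (I : finType) (a : I -> R) :
  (forall i, 0 <= a i) -> \sum_i a i ^+ 2 <= (\sum_i a i) ^+ 2.
Proof.
move=> a_ge0; rewrite expr2 big_distrlr /=.
apply: ler_sum => i _; rewrite (bigD1 i) //= expr2 lerDl.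
by apply: sumr_ge0 => j _; rewrite mulr_ge0.
Qed.

Lemma sqrrD3_le (a b c : R) : (a + b + c) ^+ 2 <= 4 * a ^+ 2 + 4 * b ^+ 2 + 2 * c ^+ 2.
Proof. have := sqr_ge0 (a + b - c); have := sqr_ge0 (a - b); nra. Qed.

End WeightedSums.

Section EuclideanNorm.
Variables (R : realType) (d : nat).
Implicit Types u v w : 'rV[R]_d.

Lemma edot_ge0 u : 0 <= edot u u.
Proof. by apply: sumr_ge0 => c _; rewrite -expr2 sqr_ge0. Qed.

Lemma enorm_ge0 u : 0 <= enorm u.
Proof. exact: sqrtr_ge0. Qed.

Lemma sqr_enorm u : enorm u ^+ 2 = edot u u.
Proof. by rewrite sqr_sqrtr // edot_ge0. Qed.

Lemma edotC u v : edot u v = edot v u.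
Proof. by apply: eq_bigr => c _; rewrite mulrC. Qed.

Lemma edotDl w u v : edot (u + v) w = edot u w + edot v w.
Proof. by rewrite /edot -big_split; apply: eq_bigr => c _; rewrite mxE mulrDl. Qed.

Lemma edotZl a u v : edot (a *: u) v = a * edot u v.
Proof. by rewrite /edot mulr_sumr; apply: eq_bigr => c _; rewrite mxE mulrA. Qed.

Lemma edot_le_enorm u v : edot u v <= enorm u * enorm v.
Proof.
have cs : edot u v ^+ 2 <= edot u u * edot v v.
  have sum_sqr (z : 'rV_d) : \sum_c 1 * z 0 c ^+ 2 = edot z z.
    by apply: eq_bigr => c _; rewrite mul1r expr2.
  have := weighted_cauchy_schwarz (u 0) (v 0) (fun=> ler01).
  by rewrite !sum_sqr; under eq_bigr do rewrite mul1r.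
by rewrite (le_trans (ler_norm _)) // -sqrtr_sqr -sqrtrM ?edot_ge0 // ler_wsqrtr.
Qed.

Lemma ler_enormD u v : enorm (u + v) <= enorm u + enorm v.
Proof.
have sqr_le : edot (u + v) (u + v) <= (enorm u + enorm v) ^+ 2.
  rewrite !edotDl (edotC u) (edotC v) !edotDl -(sqr_enorm u) -(sqr_enorm v) (edotC v u).
  have := edot_le_enorm u v; lra.
rewrite (le_trans (ler_wsqrtr sqr_le)) // sqrtr_sqr ger0_norm //.
by rewrite addr_ge0 ?enorm_ge0.
Qed.

Lemma enormZ a u : enorm (a *: u) = `|a| * enorm u.
Proof.
by rewrite /enorm edotZl edotC edotZl mulrA -expr2 sqrtrM ?sqr_ge0 // sqrtr_sqr.
Qed.

Lemma enormN u : enorm (- u) = enorm u.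
Proof. by rewrite -scaleN1r enormZ normrN normr1 mul1r. Qed.

Lemma enorm0 : enorm (0 : 'rV[R]_d) = 0.
Proof. by rewrite -(scale0r 0) enormZ normr0 mul0r. Qed.

Lemma ler_enormB u v : enorm (u - v) <= enorm u + enorm v.
Proof. by rewrite -(enormN v) ler_enormD. Qed.

Lemma ler_enorm_sum (I : finType) (P : pred I) (F : I -> 'rV[R]_d) :
  enorm (\sum_(j | P j) F j) <= \sum_(j | P j) enorm (F j).
Proof.
elim/big_rec2: _ => [|j e s _ IH]; first by rewrite enorm0.
by rewrite (le_trans (ler_enormD _ _)) // lerD2l.
Qed.

End EuclideanNorm.

Section ConvexCombination.
Variables (R : numFieldType) (M : lmodType R) (X : set M).
Hypothesis convX : convex_set X.

Lemma convex_setP (t : R) (x y : M) :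
  0 <= t -> t <= 1 -> X x -> X y -> X (t *: x + (1 - t) *: y).
Proof.
move=> t_ge0 t_le1 Xx Xy.
by have := convX (Itv01 t_ge0 t_le1) (mem_set Xx) (mem_set Xy); rewrite inE.
Qed.

(* The conic form avoids normalizing by partial weight sums, which may vanish. *)
Lemma convex_set_conic_comb (I : eqType) (w : I -> R) (y : I -> M) z0 :
  X z0 -> (forall j, 0 <= w j) -> (forall j, X (y j)) -> forall s : seq I,
  exists2 z, X z & \sum_(j <- s) w j *: y j = (\sum_(j <- s) w j) *: z.
Proof.
move=> Xz0 w_ge0 Xy; elim=> [|j s [z Xz IH]].
  by exists z0; rewrite ?big_nil ?scale0r.
rewrite !big_cons IH; set S := \sum_(j <- s) w j.
have S_ge0 : 0 <= S by apply: sumr_ge0.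
have [wS0|wS_neq0] := eqVneq (w j + S) 0.
  have /andP[/eqP wj0 /eqP S0] : (w j == 0) && (S == 0) by rewrite -paddr_eq0 ?wS0.
  by exists z => //; rewrite wj0 S0 addr0 !scale0r addr0.
have wS_gt0 : 0 < w j + S by rewrite lt_neqAle eq_sym wS_neq0 addr_ge0.
pose t := w j / (w j + S).
exists (t *: y j + (1 - t) *: z).
  apply: convex_setP => //; first by rewrite /t divr_ge0 ?w_ge0 ?ltW.
  by rewrite /t ler_pdivrMr // mul1r lerDl.
have wSt : (w j + S) * t = w j by rewrite /t mulrC divfK.
have wS1t : (w j + S) * (1 - t) = S by rewrite mulrBr mulr1 wSt addrAC subrr add0r.
by rewrite scalerDr !scalerA wSt wS1t.
Qed.

Lemma convex_set_convex_comb (I : finType) (w : I -> R) (y : I -> M) :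
  X !=set0 -> (forall j, 0 <= w j) -> (forall j, X (y j)) -> \sum_j w j = 1 ->
  X (\sum_j w j *: y j).
Proof.
move=> [z0 Xz0] w_ge0 Xy w_sum1.
have [z Xz ->] := convex_set_conic_comb Xz0 w_ge0 Xy (index_enum I).
by rewrite w_sum1 scale1r.
Qed.

End ConvexCombination.

Section ConsensusStep.
Variables (R : realType) (n d : nat) (A : 'M[R]_n).

Lemma proj_residual_le (X : set 'rV[R]_d) (P : 'rV[R]_d -> 'rV[R]_d)
    (x q : 'I_n -> 'rV[R]_d) (a : R) (h v : 'rV[R]_d) (i : 'I_n) :
  X !=set0 -> convex_set X -> is_euclid_proj X P ->
  (forall j, 0 <= A i j) -> \sum_j A i j = 1 -> (forall j, X (x j)) ->
  v = x i - q i + \sum_j A i j *: q j - a *: h ->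
  enorm (v - P v) <= \sum_j A i j * enorm ((x i - q i) - (x j - q j)) + `|a| * enorm h.
Proof.
move=> X_neq0 convX projP A_ge0 A_row Xx v_def.
have X_avg : X (\sum_j A i j *: x j) := convex_set_convex_comb convX X_neq0 A_ge0 Xx A_row.
have avg_diff : \sum_j A i j *: ((x i - q i) - (x j - q j)) =
    (x i - q i) - \sum_j A i j *: x j + \sum_j A i j *: q j.
  under eq_bigr do rewrite scalerBr.
  rewrite sumrB -scaler_suml A_row scale1r.
  under eq_bigr do rewrite scalerBr.
  by rewrite sumrB opprB addrA addrAC.
have v_sub_avg : x i - q i + \sum_j A i j *: q j - a *: h - \sum_j A i j *: x j =
    \sum_j A i j *: ((x i - q i) - (x j - q j)) - a *: h.
  by rewrite avg_diff [LHS]addrAC; congr (_ - _); rewrite addrAC.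
apply: le_trans ((projP v).2 _ X_avg) _.
rewrite v_def v_sub_avg; apply: le_trans (ler_enormB _ _) _.
rewrite enormZ lerD2r.
apply: le_trans (ler_enorm_sum _ _) _.
by apply: ler_sum => j _; rewrite enormZ ger0_norm.
Qed.

Lemma sumr_row_neighbours (adj : rel 'I_n) (i : 'I_n) (c : 'I_n -> R) :
  (forall j, i != j -> ~~ adj i j -> A i j = 0) -> c i = 0 ->
  \sum_j A i j * c j = \sum_(j | adj i j) A i j * c j.
Proof.
move=> A_nonadj ci0; rewrite (bigID (adj i)) /= [X in _ + X]big1 ?addr0 // => j nj.
by have [<-|ij] := eqVneq i j; rewrite ?ci0 ?mulr0 // A_nonadj ?mul0r.
Qed.

Lemma ler_mean_enormB (D : 'I_n -> 'rV[R]_d) (i : 'I_n) :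
  (forall j, 0 <= A i j) -> \sum_j A i j = 1 ->
  \sum_j A i j * enorm (D i - D j) <= enorm (D i) + \sum_j A i j * enorm (D j).
Proof.
move=> A_ge0 A_row.
rewrite -[X in X + _]mul1r -A_row mulr_suml -big_split /=.
by apply: ler_sum => j _; rewrite -mulrDr ler_wpM2l ?ler_enormB.
Qed.

Lemma sum_sqr_mean_le (N : 'I_n -> R) : doubly_stochastic A ->
  \sum_i (\sum_j A i j * N j) ^+ 2 <= \sum_i N i ^+ 2.
Proof.
move=> [A_ge0 [A_row A_col]].
apply: le_trans (ler_sum _ (fun i _ => sqr_convex_comb_le N (A_ge0 i) (A_row i))) _.
rewrite exchange_big /=; apply: ler_sum => j _.
by rewrite -mulr_suml A_col mul1r.
Qed.

Lemma sum_sqr_residual_le (D : 'I_n -> 'rV[R]_d) (L e : 'I_n -> R) (a : R) :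
  doubly_stochastic A -> (forall i, 0 <= L i) -> 0 <= a -> (forall i, 0 <= e i) ->
  (forall i, e i <= \sum_j A i j * enorm (D i - D j) + L i * a) ->
  \sum_i e i ^+ 2 <= 8 * \sum_i enorm (D i) ^+ 2 + 2 * (\sum_i L i) ^+ 2 * a ^+ 2.
Proof.
move=> A_ds L_ge0 a_ge0 e_ge0 e_le; have [A_ge0 [A_row _]] := A_ds.
pose N i := enorm (D i); pose M i := \sum_j A i j * N j.
have e_le_NM i : e i <= N i + M i + L i * a.
  by rewrite (le_trans (e_le i)) // lerD2r ler_mean_enormB.
have e_sqr_le i : e i ^+ 2 <= 4 * N i ^+ 2 + 4 * M i ^+ 2 + 2 * (L i * a) ^+ 2.
  apply: le_trans (sqrrD3_le _ _ _); rewrite ler_sqr ?nnegrE ?e_le_NM //.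
  exact: le_trans (e_ge0 i) (e_le_NM i).
apply: le_trans (ler_sum _ (fun i _ => e_sqr_le i)) _.
have sum_La : \sum_i (L i * a) ^+ 2 = (\sum_i L i ^+ 2) * a ^+ 2.
  by rewrite mulr_suml; apply: eq_bigr => i _; rewrite exprMn.
have sum_M := sum_sqr_mean_le N A_ds.
have sum_L := sum_sqr_le_sqr_sum L_ge0.
rewrite !big_split /= -!mulr_sumr sum_La.
rewrite /M /N in sum_M *.
have := sqr_ge0 a; nra.
Qed.

End ConsensusStep.

Theorem lemma1 (R : realType) (n d b : nat)
  (X : set 'rV[R]_d) (l u : 'rV[R]_d) (P : 'rV[R]_d -> 'rV[R]_d)
  (f : 'I_n -> 'rV[R]_d -> R) (g : 'I_n -> 'rV[R]_d -> 'rV[R]_d) (Lc : 'I_n -> R)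
  (adj : rel 'I_n) (A : 'M[R]_n) (sigma2 : R)
  (alpha : nat -> R) (x q : nat -> 'I_n -> 'rV[R]_d) (x0 : 'rV[R]_d) :
  (* the constraint set *)
  X !=set0 -> compact X -> convex_set X ->
  (forall y, X y -> forall c, l 0 c <= y 0 c <= u 0 c) ->
  is_euclid_proj X P ->
  (* local objectives and bounded chosen subgradients *)
  (forall i, convex_fun (f i)) ->
  (forall i y, is_subgrad (f i) y (g i y)) ->
  (forall i y, X y -> enorm (g i y) <= Lc i) ->
  (* communication graph and weights *)
  (forall i j, adj i j = adj j i) -> (forall i, ~~ adj i i) ->
  (forall i j, connect adj i j) ->
  doubly_stochastic A -> irreducible_mx A -> aperiodic_mx A ->
  (forall i j, i != j -> (0 < A i j <-> adj i j)) ->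
  (forall i j, i != j -> ~~ adj i j -> A i j = 0) ->
  second_sv A sigma2 -> 0 < sigma2 < 1 ->
  (* quantizer with b bits *)
  (0 < b)%N ->
  (* step sizes: positive, nonincreasing *)
  (forall k, 0 < alpha k) -> (forall k, alpha k.+1 <= alpha k) ->
  (* the algorithm *)
  grid_point l u b x0 ->
  (forall i, x 0%N i = x0) -> (forall i, q 0%N i = x0) ->
  (forall k i, x k.+1 i = P (vv A alpha g x q i k)) ->
  (forall k i,
     let w := (48 * (2 + \sum_j Lc j) / (1 - sigma2)) / 2 * alpha k in
     quant (q k i - const_rv d w) (q k i + const_rv d w) b (x k.+1 i) (q k.+1 i)) ->
  (* conclusion (for k = 0 it needs the initial point to lie in X) *)
  forall k, (0 < k)%N \/ X x0 ->
    (forall i,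
       enorm (vv A alpha g x q i k - P (vv A alpha g x q i k)) <=
       \sum_(j | adj i j) A i j * enorm ((x k i - q k i) - (x k j - q k j)) + Lc i * alpha k) /\
    \sum_i enorm (vv A alpha g x q i k - P (vv A alpha g x q i k)) ^+ 2 <=
      8 * \sum_i enorm (x k i - q k i) ^+ 2 + 2 * (\sum_i Lc i) ^+ 2 * alpha k ^+ 2.
Proof.
move=> X_neq0 _ convX _ projP _ _ g_le _ _ _ A_ds _ _ _ A_nonadj _ _ _
  alpha_gt0 _ _ x0E _ xS _ k k_gt0_or_Xx0.
have [A_ge0 [A_row _]] := A_ds.
have Xx j : X (x k j).
  case: k k_gt0_or_Xx0 => [[//|Xx0]|k _]; first by rewrite x0E.
  by rewrite xS; case: (projP (vv A alpha g x q j k)).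
have Lc_ge0 i : 0 <= Lc i.
  by have [y Xy] := X_neq0; apply: le_trans (g_le i y Xy); apply: enorm_ge0.
have residual_le i :
    enorm (vv A alpha g x q i k - P (vv A alpha g x q i k)) <=
    \sum_j A i j * enorm ((x k i - q k i) - (x k j - q k j)) + Lc i * alpha k.
  have vE : vv A alpha g x q i k =
      x k i - q k i + \sum_j A i j *: q k j - alpha k *: g i (x k i) by [].
  apply: le_trans (proj_residual_le X_neq0 convX projP (A_ge0 i) (A_row i) Xx vE) _.
  rewrite lerD2l ger0_norm; last exact: ltW.
  by rewrite mulrC ler_pM2r // g_le.
split=> [i|].
  by rewrite -sumr_row_neighbours ?subrr ?enorm0 //; apply: A_nonadj.
apply: (sum_sqr_residual_le A_ds Lc_ge0 (ltW (alpha_gt0 k)) _ residual_le) => i.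
exact: enorm_ge0.
Qed.
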